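(* Let $C\subseteq\Pr(\mathbb{T})$ be minimal with respect to being compact, convex, closed under $\hat{}$, and nonempty, and let $\preceq$ be a linear quasi-order on $\mathbb{T}$ such that $s\prec s\,\hat{}\,t$ and $t\prec s\,\hat{}\,t$ for all $s,t\in\mathbb{T}$. Then either (i) for every $\mu\in C$ and every incompatible pair $\sigma<_{\mathrm{lex}}\varsigma$ of finite binary sequences, $\mu$-almost every $t$ satisfies $t/\sigma\prec t/\varsigma$; or (ii) for every $\mu\in C$ and every incompatible pair $\sigma<_{\mathrm{lex}}\varsigma$ of finite binary sequences, $\mu$-almost every $t$ satisfies $t/\varsigma\prec t/\sigma$.
   Context: For $a,b\subseteq(0,1]$ put $a\,\hat{}\,b=\tfrac12 a\cup\tfrac12(b+1)$; $\mathbb{T}$ is the set generated from $\mathbf{1}=\{1\}$ by $\hat{}$ (free binary system on one generator; each $t\neq\mathbf1$ is uniquely $a\,\hat{}\,b$). $\Pr(\mathbb{T})$ is the set of finitely additive probability measures on $\mathbb{T}$, viewed as positive normalized functionals on $\ell^\infty(\mathbb{T})$ with the weak* topology; $(\mu\,\hat{}\,\nu)(f)=\int\int f(x\,\hat{}\,y)\,d\nu(y)\,d\mu(x)$, and $C$ is closed under $\hat{}$ if $\mu\,\hat{}\,\nu\in C$ for $\mu,\nu\in C$. A linear quasi-order is a reflexive transitive relation in which any two elements are comparable; $s\prec t$ means $s\preceq t$ and not $t\preceq s$. For a finite binary sequence $\sigma$, $t/\sigma$ is the subterm at address $\sigma$: $t/\emptyset=t$, $(a\,\hat{}\,b)/0\sigma=a/\sigma$,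 $(a\,\hat{}\,b)/1\sigma=b/\sigma$ (undefined otherwise). Two sequences are incompatible if neither is an initial segment of the other; $<_{\mathrm{lex}}$ is lexicographic order. ''$\mu$-almost every $t$ satisfies $P$'' means the set of $t$ for which the relevant subterms are defined and $P$ holds has $\mu$-measure $1$. *)

From HB Require Import structures.
From mathcomp Require Import all_boot all_order all_algebra.
From mathcomp Require Import all_classical all_reals all_analysis.
From mathcomp Require Import Rstruct Rstruct_topology.
Set Implicit Arguments. Unset Strict Implicit. Unset Printing Implicit Defensive.
Import Order.TTheory GRing.Theory Num.Theory.
Local Open Scope classical_set_scope.
Local Open Scope ring_scope.

(* The free binary system T on one generator 1: binary trees,
   [leaf] = 1, [node a b] = a ^ b. *)
Inductive tree : Type := leaf | node of tree & tree.

Notation realR := Rdefinitions.R.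

Definition bounded_fun (f : tree -> realR) : Prop :=
  exists M : realR, forall x, `|f x| <= M.

(* A finitely additive probability measure on T, viewed as a positive
   normalized linear functional on l^oo(T).  It is encoded as a function on
   all of (tree -> R), normalized to be 0 outside l^oo(T), so that the
   encoding is injective and the topology of pointwise convergence on
   (tree -> R) -> R restricts to the weak* topology. *)
Definition is_mean (phi : (tree -> realR) -> realR) : Prop :=
  [/\ (forall f g, bounded_fun f -> bounded_fun g ->
         phi (fun x => f x + g x) = phi f + phi g),
      (forall (c : realR) f, bounded_fun f -> phi (fun x => c * f x) = c * phi f),
      (forall f, bounded_fun f -> (forall x, 0 <= f x) -> 0 <= phi f),
      phi (fun _ => 1) = 1
    & (forall f, ~ bounded_fun f -> phi f = 0)].

Definition PrT : set ((tree -> realR) -> realR) := [set phi | is_mean phi].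

Definition conv (mu nu : (tree -> realR) -> realR) : (tree -> realR) -> realR :=
  fun f => if `[< bounded_fun f >]
           then mu (fun x => nu (fun y => f (node x y))) else 0.

Definition closed_under_conv (C : set ((tree -> realR) -> realR)) : Prop :=
  forall mu nu, C mu -> C nu -> C (conv mu nu).

Definition convex_set (C : set ((tree -> realR) -> realR)) : Prop :=
  forall mu nu (t : realR), C mu -> C nu -> 0 <= t <= 1 ->
    C (fun f => t * mu f + (1 - t) * nu f).

Definition weak_star_compact (C : set ((tree -> realR) -> realR)) : Prop :=
  compact (C : set {ptws (tree -> realR) -> realR}).

Definition good_set (C : set ((tree -> realR) -> realR)) : Prop :=
  [/\ C `<=` PrT, weak_star_compact C, convex_set C, closed_under_conv C
    & C !=set0].

Definition minimal_good (C : set ((tree -> realR) -> realR)) : Prop :=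
  good_set C /\ forall D, D `<=` C -> good_set D -> D = C.

Definition meas (mu : (tree -> realR) -> realR) (A : set tree) : realR :=
  mu (\1_A).

Definition ae (mu : (tree -> realR) -> realR) (P : tree -> Prop) : Prop :=
  meas mu [set t | P t] = 1.

Definition linear_quasi_order (le : tree -> tree -> Prop) : Prop :=
  [/\ (forall s, le s s),
      (forall s t u, le s t -> le t u -> le s u)
    & (forall s t, le s t \/ le t s)].

Definition strict (le : tree -> tree -> Prop) (s t : tree) : Prop :=
  le s t /\ ~ le t s.

(* t / sigma; false = 0 (left), true = 1 (right) *)
Fixpoint subterm (t : tree) (s : seq bool) : option tree :=
  match s with
  | [::] => Some t
  | b :: s' => match t with
               | leaf => None
               | node a c => subterm (if b then c else a) s'
               end
  end.

Definition incompatible (s1 s2 : seq bool) : Prop :=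
  ~~ prefix s1 s2 /\ ~~ prefix s2 s1.

Fixpoint lexlt (s1 s2 : seq bool) : bool :=
  match s1, s2 with
  | [::], [::] => false
  | [::], _ :: _ => true
  | _ :: _, [::] => false
  | a :: s1', b :: s2' => (~~ a && b) || ((a == b) && lexlt s1' s2')
  end.

Definition ae_sub_lt (le : tree -> tree -> Prop) mu (s1 s2 : seq bool) : Prop :=
  ae mu (fun t => exists a b, subterm t s1 = Some a /\ subterm t s2 = Some b /\
                              strict le a b).

From Pilot Require Import Defs.
From HB Require Import structures.
From mathcomp Require Import all_boot all_order all_algebra.
From mathcomp Require Import all_classical all_reals all_analysis.
From mathcomp Require Import Rstruct Rstruct_topology.
From mathcomp Require Import lra.
Set Implicit Arguments. Unset Strict Implicit. Unset Printing Implicit Defensive.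
Import Order.TTheory GRing.Theory Num.Theory.
Local Open Scope classical_set_scope.
Local Open Scope ring_scope.

(* Minimality of C is used through one principle: a weak*-closed condition
   on means that holds somewhere in C and is preserved inside C by convex
   combinations and by ^ holds on all of C.  For a set A closed under taking
   immediate subterms, (mu ^ nu)(A) <= mu(A) nu(A), and the principle turns
   this into a zero-one law.  It also propagates full measure from subterms to
   terms; at the node where sigma and varsigma branch apart, "t/sigma lies in
   G" and "{b | R a b} is full for each a in G" combine into
   "R (t/sigma) (t/varsigma)" almost surely.  The zero-one law applied to the
   trees whose lower set is null selects the alternative: if almost every tree
   has a null lower set, t/varsigma lies above t/sigma; otherwise almost every
   tree a has a full strict lower set, and t/varsigma lies below t/sigma. *)

(* MathComp-Analysis also exports [bounded_fun] and [conv]; the qualified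
   names refer to the definitions of the statement. *)

Lemma bounded_fun_in01 (f : tree -> realR) :
  (forall x, 0 <= f x <= 1) -> Defs.bounded_fun f.
Proof. by move=> f01; exists 1 => x; case/andP: (f01 x) => f0 f1; rewrite ger0_norm. Qed.

Lemma indic_in01 (A : set tree) x : 0 <= (\1_A x : realR) <= 1.
Proof. by rewrite indicE; case: (x \in A); rewrite ?lexx ?ler01. Qed.

Lemma bounded_fun_indic (A : set tree) : Defs.bounded_fun (\1_A).
Proof. exact/bounded_fun_in01/indic_in01. Qed.

Section Mean.
Variable phi : (tree -> realR) -> realR.
Hypothesis phi_mean : is_mean phi.

Lemma mean_cst c : phi (fun _ => c) = c.
Proof.
have [_ phiZ _ phi1 _] := phi_mean.
rewrite (_ : (fun _ => c) = (fun _ => c * 1)); last by apply/funext => x; rewrite mulr1.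
by rewrite phiZ ?phi1 ?mulr1 //; exists 1 => x; rewrite normr1.
Qed.

Lemma le_mean f g : Defs.bounded_fun f -> Defs.bounded_fun g -> (forall x, f x <= g x) ->
  phi f <= phi g.
Proof.
move=> [M fM] [N gN] fg; have [phiD phiZ phi_ge0 _ _] := phi_mean.
have bNf : Defs.bounded_fun (fun x => -1 * f x).
  by exists M => x; rewrite mulN1r normrN.
have bgf : Defs.bounded_fun (fun x => g x + -1 * f x).
  by exists (N + M) => x; apply: le_trans (ler_normD _ _) _; rewrite lerD ?mulN1r ?normrN.
rewrite (_ : g = (fun x => f x + (g x + -1 * f x))); last first.
  by apply/funext => x; rewrite mulN1r addrC subrK.
rewrite phiD ?lerDl //; first by apply: phi_ge0 => // x; rewrite mulN1r subr_ge0.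
by exists M.
Qed.

Lemma mean_in01 f : (forall x, 0 <= f x <= 1) -> 0 <= phi f <= 1.
Proof.
move=> f01; have bf := bounded_fun_in01 f01.
have bc c : Defs.bounded_fun (fun _ : tree => c) by exists `|c|.
rewrite -[X in X <= _ <= _](mean_cst 0) -[X in _ <= _ <= X](mean_cst 1).
by rewrite !le_mean // => x; case/andP: (f01 x).
Qed.

Lemma meas_in01 A : 0 <= meas phi A <= 1.
Proof. exact/mean_in01/indic_in01. Qed.

Lemma le_meas A B : A `<=` B -> meas phi A <= meas phi B.
Proof.
move=> AB; apply: le_mean (bounded_fun_indic _) (bounded_fun_indic _) _ => x.
rewrite !indicE; have [/set_mem/AB/mem_set -> //|_] := boolP (x \in A).
by case/andP: (indic_in01 B x).
Qed.

Lemma meas_set0 : meas phi set0 = 0.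
Proof. by rewrite /meas indic0 mean_cst. Qed.

Lemma meas_setT : meas phi setT = 1.
Proof. by rewrite /meas indicT mean_cst. Qed.

Lemma meas_setC A : meas phi (~` A) = 1 - meas phi A.
Proof.
have [phiD _ _ phi1 _] := phi_mean.
apply/eqP; rewrite eq_sym subr_eq -phi1 /meas -phiD; try exact: bounded_fun_indic.
apply/eqP; congr phi; apply/funext => x.
by rewrite indicC indicE; case: (x \in A); rewrite ?addr0 ?add0r.
Qed.

Lemma meas_eq1S A B : A `<=` B -> meas phi A = 1 -> meas phi B = 1.
Proof.
move=> AB A1; apply/eqP; rewrite eq_le; case/andP: (meas_in01 B) => _ -> /=.
by rewrite -A1 le_meas.
Qed.

End Mean.

Definition subterm_closed (A : set tree) : Prop :=
  forall x y, A (node x y) -> A x /\ A y.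

Lemma meas_conv mu nu (A : set tree) :
  meas (Defs.conv mu nu) A = mu (fun x => meas nu [set y | A (node x y)]).
Proof. by rewrite /meas /Defs.conv asboolT //; exact: bounded_fun_indic. Qed.

Section Convolution.
Variables mu nu : (tree -> realR) -> realR.
Hypotheses (mu_mean : is_mean mu) (nu_mean : is_mean nu).

Let bounded_section (A : set tree) :
  Defs.bounded_fun (fun x => meas nu [set y | A (node x y)]).
Proof. by apply: bounded_fun_in01 => x; exact: meas_in01. Qed.

Lemma meas_conv_eq1 (A F : set tree) : meas mu A = 1 ->
  (forall x, A x -> meas nu [set y | F (node x y)] = 1) ->
  meas (Defs.conv mu nu) F = 1.
Proof.
move=> A1 FA; rewrite meas_conv; apply/eqP; rewrite eq_le.
case/andP: (mean_in01 mu_mean (fun x => meas_in01 nu_mean [set y | F (node x y)])).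
move=> _ -> /=; rewrite -{1}A1.
apply: (le_mean mu_mean (bounded_fun_indic _) (bounded_section _)).
move=> x; rewrite indicE; have [/set_mem/FA -> //|_] := boolP (x \in A).
by case/andP: (meas_in01 nu_mean [set y | F (node x y)]).
Qed.

Lemma meas_conv_le_right (A B : set tree) :
  (forall x y, A (node x y) -> B y) -> meas (Defs.conv mu nu) A <= meas nu B.
Proof.
move=> AB; rewrite meas_conv -[X in _ <= X](mean_cst mu_mean).
apply: le_mean => //; first by exists `|meas nu B|.
by move=> x; apply: le_meas => // y /AB.
Qed.

Lemma meas_conv_le_mul A : subterm_closed A ->
  meas (Defs.conv mu nu) A <= meas mu A * meas nu A.
Proof.
move=> A_closed; have [_ muZ _ _ _] := mu_mean.
have /andP[nuA0 nuA1] := meas_in01 nu_mean A.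
rewrite meas_conv mulrC [meas mu A]/meas -muZ; last exact: bounded_fun_indic.
apply: le_mean => //.
  apply: bounded_fun_in01 => x; have /andP[? ?] := indic_in01 A x.
  by rewrite mulr_ge0 ?mulr_ile1.
move=> x; rewrite indicE; have [xA|xNA] := boolP (x \in A).
  by rewrite mulr1; apply: le_meas => // y /A_closed[].
rewrite mulr0 -(meas_set0 nu_mean); apply: le_meas => // y /A_closed[/mem_set].
by rewrite (negbTE xNA).
Qed.

End Convolution.

Definition full_in (C : set ((tree -> realR) -> realR)) (A : set tree) : Prop :=
  forall mu, C mu -> meas mu A = 1.

Definition null_in (C : set ((tree -> realR) -> realR)) (A : set tree) : Prop :=
  forall mu, C mu -> meas mu A = 0.

Definition subterm_in (Q : set tree) (r : seq bool) : set tree :=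
  [set t | exists a, subterm t r = Some a /\ Q a].

Definition subterms_rel (R : tree -> tree -> Prop) (s1 s2 : seq bool) : set tree :=
  [set t | exists a b, subterm t s1 = Some a /\ subterm t s2 = Some b /\ R a b].

Lemma continuous_eval (f : tree -> realR) :
  continuous (fun nu : {ptws (tree -> realR) -> realR} => nu f).
Proof. exact: (@proj_continuous _ (fun _ => realR) f). Qed.

Lemma closed_eval_le (f : tree -> realR) (c : realR) :
  closed ([set nu | nu f <= c] : set {ptws (tree -> realR) -> realR}).
Proof.
have eval_closed := proj1 (continuous_closedP _) (@continuous_eval f).
exact: (eval_closed _ (@closed_le _ c)).
Qed.

Lemma closed_eval_ge (f : tree -> realR) (c : realR) :
  closed ([set nu | c <= nu f] : set {ptws (tree -> realR) -> realR}).
Proof.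
have eval_closed := proj1 (continuous_closedP _) (@continuous_eval f).
exact: (eval_closed _ (@closed_ge _ c)).
Qed.

Section MinimalGood.
Variable C : set ((tree -> realR) -> realR).
Hypothesis C_min : minimal_good C.

Lemma minimal_good_mean mu : C mu -> is_mean mu.
Proof. by case: C_min => -[C_Pr _ _ _ _] _ /C_Pr. Qed.

Lemma minimal_good_sub (P : set ((tree -> realR) -> realR)) :
  closed (P : set {ptws (tree -> realR) -> realR}) ->
  (forall mu nu t, C mu -> C nu -> P mu -> P nu -> 0 <= t <= 1 ->
     P (fun f => t * mu f + (1 - t) * nu f)) ->
  (forall mu nu, C mu -> C nu -> P mu -> P nu -> P (Defs.conv mu nu)) ->
  C `&` P !=set0 -> C `<=` P.
Proof.
move=> P_closed P_convex P_conv CP0.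
have [[C_Pr C_compact C_convex C_conv _] C_minimal] := C_min.
suff CP_good : good_set (C `&` P).
  by rewrite -(C_minimal _ (@subIsetl _ C P) CP_good) => mu [].
split => //.
- by move=> mu [/C_Pr].
- exact: compact_closedI.
- by move=> mu nu t [Cmu Pmu] [Cnu Pnu] t01; split; [exact: C_convex | exact: P_convex].
- by move=> mu nu [Cmu Pmu] [Cnu Pnu]; split; [exact: C_conv | exact: P_conv].
Qed.

Lemma minimal_good_meas_le (A : set tree) c :
  (exists2 mu, C mu & meas mu A <= c) ->
  (forall mu nu, C mu -> C nu -> meas mu A <= c -> meas nu A <= c ->
     meas (Defs.conv mu nu) A <= c) ->
  forall mu, C mu -> meas mu A <= c.
Proof.
move=> [mu0 Cmu0 mu0A] conv_le.
suff : C `<=` [set nu | nu (\1_A) <= c] by [].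
apply: minimal_good_sub; [exact: closed_eval_le | | exact: conv_le | by exists mu0].
by move=> mu nu t _ _ /= muA nuA /andP[t0 t1]; nra.
Qed.

Lemma full_in_conv (A : set tree) :
  (forall mu nu, C mu -> C nu -> meas (Defs.conv mu nu) A = 1) -> full_in C A.
Proof.
move=> conv1 mu Cmu; have [[_ _ _ C_conv [mu0 Cmu0]] _] := C_min.
apply/eqP; rewrite eq_le; case/andP: (meas_in01 (minimal_good_mean Cmu) A) => _ -> /=.
suff : C `<=` [set nu | 1 <= nu (\1_A)] by apply.
apply: minimal_good_sub; first exact: closed_eval_ge.
- by move=> m n t _ _ /= mA nA /andP[t0 t1]; nra.
- by move=> m n Cm Cn _ _; rewrite /= -/(meas _ A) conv1.
- by exists (Defs.conv mu0 mu0); split; [exact: C_conv | rewrite /= -/(meas _ A) conv1].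
Qed.

(* With [p := meas mu0 A < 1] and [g := meas (mu0 ^ mu0) A], minimality
   forces [p <= g <= p ^ 2], hence [p = 0] and then [g = 0]. *)
Lemma zero_one_law (A : set tree) :
  subterm_closed A -> null_in C A \/ full_in C A.
Proof.
move=> A_closed; have [[_ _ _ C_conv _] _] := C_min.
have [|not_full] := pselect (full_in C A); [by right | left].
have [mu0 Cmu0 mu0A] : exists2 mu0, C mu0 & meas mu0 A < 1.
  apply: contra_notP not_full => no_mu0 mu Cmu; apply/eqP; rewrite eq_le.
  case/andP: (meas_in01 (minimal_good_mean Cmu) A) => _ -> /=.
  by rewrite leNgt; apply/negP => muA; apply: no_mu0; exists mu.
have mean0 := minimal_good_mean Cmu0.
have Cg := C_conv _ _ Cmu0 Cmu0.
have /andP[g0 g1] := meas_in01 (minimal_good_mean Cg) A.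
have le_g : forall mu, C mu -> meas mu A <= meas (Defs.conv mu0 mu0) A.
  apply: minimal_good_meas_le; first by exists (Defs.conv mu0 mu0).
  move=> mu nu Cmu Cnu muA nuA.
  have mu_mean := minimal_good_mean Cmu; have /andP[muA0 _] := meas_in01 mu_mean A.
  apply: le_trans (meas_conv_le_mul mu_mean (minimal_good_mean Cnu) A_closed) _.
  nra.
have g_le := meas_conv_le_mul mean0 mean0 A_closed.
have mu0_le_g := le_g _ Cmu0; have /andP[mu0A0 _] := meas_in01 mean0 A.
have g_eq0 : meas (Defs.conv mu0 mu0) A = 0 by nra.
move=> mu Cmu; apply/eqP; rewrite eq_le -g_eq0 le_g //= g_eq0.
by case/andP: (meas_in01 (minimal_good_mean Cmu) A).
Qed.

Lemma full_in_node (F F' : set tree) (b : bool) :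
  (forall x y, F' (if b then y else x) -> F (node x y)) ->
  full_in C F' -> full_in C F.
Proof.
move=> F'F F'_full; apply: full_in_conv => mu nu Cmu Cnu.
have mu_mean := minimal_good_mean Cmu; have nu_mean := minimal_good_mean Cnu.
case: b F'F => F'F.
- apply: (meas_conv_eq1 mu_mean nu_mean (meas_setT mu_mean)) => x _.
  by apply: (meas_eq1S nu_mean _ (F'_full _ Cnu)) => y /(F'F x).
- apply: (meas_conv_eq1 mu_mean nu_mean (F'_full _ Cmu)) => x F'x.
  by apply: (meas_eq1S nu_mean _ (meas_setT nu_mean)) => y _; exact: F'F.
Qed.

Lemma full_in_subterm (Q : set tree) r :
  full_in C Q -> full_in C (subterm_in Q r).
Proof.
move=> Q_full; elim: r => [|b r IH].
  move=> mu Cmu; apply: (meas_eq1S (minimal_good_mean Cmu) _ (Q_full _ Cmu)).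
  (* [subterm] recurses on the tree: [subterm t [::]] reduces only once [t] is destructed. *)
  by move=> t Qt; exists t; case: t Qt.
exact: (full_in_node (F' := subterm_in Q r) (b := b)).
Qed.

Lemma full_in_subterms_rel (R : tree -> tree -> Prop) (G : set tree) s1 s2 :
  full_in C G -> (forall a, G a -> full_in C (R a)) ->
  incompatible s1 s2 -> lexlt s1 s2 -> full_in C (subterms_rel R s1 s2).
Proof.
move=> G_full R_full; elim: s1 s2 => [|b1 s1 IH] [|b2 s2] //; first by case.
case=> /= s12 s21; case: b1 b2 s12 s21 => [] [] //= s12 s21 lt12.
- by apply: (full_in_node (F' := subterms_rel R s1 s2) (b := true)) => //; exact: IH.
- apply: full_in_conv => mu nu Cmu Cnu.
  apply: (meas_conv_eq1 (minimal_good_mean Cmu) (minimal_good_mean Cnu)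
            (full_in_subterm s1 G_full Cmu)) => x [a [xa Ga]].
  apply: (meas_eq1S (minimal_good_mean Cnu) _ (full_in_subterm s2 (R_full a Ga) Cnu)).
  by move=> y [b [yb Rab]]; exists a, b.
- by apply: (full_in_node (F' := subterms_rel R s1 s2) (b := false)) => //; exact: IH.
Qed.

End MinimalGood.

Section QuasiOrder.
Variables (C : set ((tree -> realR) -> realR)) (le : tree -> tree -> Prop).
Hypotheses (C_min : minimal_good C)
  (le_trans : forall s t u, le s t -> le t u -> le s u)
  (le_total : forall s t, le s t \/ le t s)
  (lt_node : forall s t, strict le s (node s t) /\ strict le t (node s t)).

Lemma lt_of_node_le s t a :
  le (node s t) a -> strict le s a /\ strict le t a.
Proof.
move=> st_a; have [[s_st st_s] [t_st st_t]] := lt_node s t.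
split; split; try exact: le_trans st_a.
- by move=> a_s; apply: st_s; exact: le_trans a_s.
- by move=> a_t; apply: st_t; exact: le_trans a_t.
Qed.

Lemma subterm_closed_le a : subterm_closed [set y | le y a].
Proof. by move=> s t /lt_of_node_le[[s_a _] [t_a _]]. Qed.

Lemma subterm_closed_lt a : subterm_closed [set y | strict le y a].
Proof. by move=> s t [/lt_of_node_le]. Qed.

Definition null_below (a : tree) : Prop := null_in C [set y | le y a].

Lemma subterm_closed_null_below : subterm_closed null_below.
Proof.
have null_le a b : le a b -> null_below b -> null_below a.
  move=> ab b_null mu Cmu; have mu_mean := minimal_good_mean C_min Cmu.
  apply/eqP; rewrite eq_le; case/andP: (meas_in01 mu_mean [set y | le y a]) => -> _.
  by rewrite andbT -(b_null _ Cmu) le_meas // => y ya; exact: le_trans ya ab.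
by move=> s t st_null; have [[s_st _] [t_st _]] := lt_node s t; split; exact: null_le st_null.
Qed.

(* Were [{y | y < a}] null, [mu0 ^ mu0] would give the full set [{y | y <= a}]
   measure 0, because [node x y <= a] forces [y < a]. *)
Lemma full_lt_of_not_null_below a :
  ~ null_below a -> full_in C [set y | strict le y a].
Proof.
move=> a_not_null; have [[_ _ _ C_conv [mu0 Cmu0]] _] := C_min.
have [le_null|le_full] := zero_one_law C_min (@subterm_closed_le a); first by case: a_not_null.
have [lt_null|//] := zero_one_law C_min (@subterm_closed_lt a).
have mean0 := minimal_good_mean C_min Cmu0.
have := meas_conv_le_right mean0 mean0 (A := [set y | le y a]) (B := [set y | strict le y a])
  (fun x y xy_a => (lt_of_node_le xy_a).2).
by rewrite le_full ?lt_null ?ler10 //; exact: C_conv.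
Qed.

Lemma full_gt_of_null_below a :
  null_below a -> full_in C [set b | strict le a b].
Proof.
move=> a_null mu Cmu; have mu_mean := minimal_good_mean C_min Cmu.
apply: (meas_eq1S mu_mean _ (_ : meas mu (~` [set y | le y a]) = 1)).
  by move=> b /= b_a; split => //; case: (le_total a b) => // /b_a.
by rewrite meas_setC // a_null // subr0.
Qed.

End QuasiOrder.

Theorem proposition5p4 (C : set ((tree -> realR) -> realR))
    (le : tree -> tree -> Prop) :
  minimal_good C ->
  linear_quasi_order le ->
  (forall s t, strict le s (node s t) /\ strict le t (node s t)) ->
  (forall mu, C mu -> forall s1 s2 : seq bool,
      incompatible s1 s2 -> lexlt s1 s2 -> ae_sub_lt le mu s1 s2)
  \/
  (forall mu, C mu -> forall s1 s2 : seq bool,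
      incompatible s1 s2 -> lexlt s1 s2 ->
      ae mu (fun t => exists a b, subterm t s1 = Some a /\ subterm t s2 = Some b /\
                                  strict le b a)).
Proof.
move=> C_min [_ le_trans le_total] lt_node.
have [below_null|below_full] :=
  zero_one_law C_min (subterm_closed_null_below C_min le_trans lt_node).
- right=> mu Cmu s1 s2 s12 lt12.
  have not_below_full : full_in C (~` null_below C le).
    move=> nu Cnu; rewrite meas_setC ?below_null ?subr0 //; exact: minimal_good_mean Cnu.
  exact: (full_in_subterms_rel (R := fun a b => strict le b a) C_min not_below_full
            (full_lt_of_not_null_below C_min le_trans lt_node) s12 lt12 Cmu).
- left=> mu Cmu s1 s2 s12 lt12.
  exact: (full_in_subterms_rel (R := strict le) C_min below_full
            (full_gt_of_null_below C_min le_total) s12 lt12 Cmu).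
Qed.
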